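(* Let $a,b,c\in\mathbb{R}^n$. Then the set $\{X\in\mathbb{S}^n_+:\ a^\top Xb\ge 0,\ b^\top Xc\ge 0,\ a^\top Xc\ge 0\}$ is rank-one generated.
   Context: $\mathbb{S}^n_+$ is the cone of real symmetric positive semidefinite $n\times n$ matrices. A closed convex cone $\mathcal{S}\subseteq\mathbb{S}^n_+$ is rank-one generated (ROG) if $\mathcal{S}=\mathrm{conv}(\mathcal{S}\cap\{xx^\top:x\in\mathbb{R}^n\})$. *)

From HB Require Import structures.
From mathcomp Require Import all_boot all_order all_algebra.
From mathcomp Require Import reals.
Set Implicit Arguments. Unset Strict Implicit. Unset Printing Implicit Defensive.
Import Order.TTheory GRing.Theory Num.Theory.
Local Open Scope ring_scope.

Definition psd (R : realType) (n : nat) (X : 'M[R]_n) : Prop :=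
  X^T = X /\ forall x : 'cV[R]_n, 0 <= (x^T *m X *m x) 0 0.

Definition bform (R : realType) (n : nat) (u : 'cV[R]_n) (X : 'M[R]_n) (v : 'cV[R]_n) : R :=
  (u^T *m X *m v) 0 0.

Definition is_xxT (R : realType) (n : nat) (X : 'M[R]_n) : Prop :=
  exists x : 'cV[R]_n, X = x *m x^T.

Definition conv_hull (R : realType) (n : nat) (S : 'M[R]_n -> Prop) : 'M[R]_n -> Prop :=
  fun X => exists (k : nat) (l : 'I_k -> R) (Y : 'I_k -> 'M[R]_n),
    (forall i, 0 <= l i) /\ \sum_(i < k) l i = 1 /\ (forall i, S (Y i)) /\
    X = \sum_(i < k) l i *: Y i.

Definition ROG (R : realType) (n : nat) (S : 'M[R]_n -> Prop) : Prop :=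
  forall X, S X <-> conv_hull (fun Y => S Y /\ is_xxT Y) X.

Definition Sabc (R : realType) (n : nat) (a b c : 'cV[R]_n) : 'M[R]_n -> Prop :=
  fun X => psd X /\ 0 <= bform a X b /\ 0 <= bform b X c /\ 0 <= bform a X c.

From HB Require Import structures.
From mathcomp Require Import all_boot all_order all_algebra.
From mathcomp Require Import reals.
From mathcomp Require Import ring lra.
Set Implicit Arguments. Unset Strict Implicit. Unset Printing Implicit Defensive.
Import Order.TTheory GRing.Theory Num.Theory.
Local Open Scope ring_scope.

(* If y^T X y > 0, then p = X y / sqrt (y^T X y) splits the psd matrix X as
   p p^T + (X - p p^T) with both pieces psd.  The rank-one piece takes the
   value (u^T X y)(v^T X y) / (y^T X y) on (u, v), and the remainder kills y,
   so its rank is smaller.  Hence a cone cut out of S^n_+ by constraints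
   u^T X v >= 0 is rank-one generated as soon as every nonzero element has a
   pivot y for which both pieces satisfy the constraints.  For the constraints
   on (a, b), (b, c), (a, c) one of a, b, c is such a pivot: if all three
   failed, multiplying the three failing inequalities would contradict the
   product of the Cauchy-Schwarz inequalities for the Gram entries.  When X
   vanishes on a, b and c, any y with y^T X y > 0 is a pivot. *)

Lemma discr_le_of_quadratic_ge0 (R : realFieldType) (A B C : R) :
  0 <= A -> (forall t, 0 <= A * t ^+ 2 + 2 * B * t + C) -> B ^+ 2 <= A * C.
Proof.
move=> A_ge0 q_ge0; have [A_gt0|A_le0] := ltrP 0 A.
  have := q_ge0 (- (B / A)).
  have -> : A * (- (B / A)) ^+ 2 + 2 * B * - (B / A) + C = C - B ^+ 2 / A.
    by field; rewrite gt_eqF.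
  by rewrite subr_ge0 ler_pdivrMr // mulrC.
have A0 : A = 0 by apply/le_anti/andP.
have [-> | B_neq0] := eqVneq B 0; first by rewrite A0 expr2 !mul0r.
have := q_ge0 (- (C + 1) / (2 * B)).
have -> : A * (- (C + 1) / (2 * B)) ^+ 2 + 2 * B * (- (C + 1) / (2 * B)) + C
          = -1 by rewrite A0; field.
by rewrite ler0N1.
Qed.

Section BilinearForm.
Variables (R : realType) (n : nat).
Implicit Types (u v w y p q : 'cV[R]_n) (X Y : 'M[R]_n).

Lemma bformDl u v X w : bform (u + v) X w = bform u X w + bform v X w.
Proof. by rewrite /bform linearD /= !mulmxDl mxE. Qed.

Lemma bformZl (k : R) u X v : bform (k *: u) X v = k * bform u X v.
Proof. by rewrite /bform linearZ /= -!scalemxAl mxE. Qed.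

Lemma bformDr u X v w : bform u X (v + w) = bform u X v + bform u X w.
Proof. by rewrite /bform mulmxDr mxE. Qed.

Lemma bformZr (k : R) u X v : bform u X (k *: v) = k * bform u X v.
Proof. by rewrite /bform -scalemxAr mxE. Qed.

Lemma bformZm (k : R) u X v : bform u (k *: X) v = k * bform u X v.
Proof. by rewrite /bform -scalemxAr -scalemxAl mxE. Qed.

Lemma bformBm u X Y v : bform u (X - Y) v = bform u X v - bform u Y v.
Proof. by rewrite /bform mulmxBr mulmxBl !mxE. Qed.

Lemma bform_sumZm u k (l : 'I_k -> R) (Y : 'I_k -> 'M[R]_n) v :
  bform u (\sum_(i < k) l i *: Y i) v = \sum_(i < k) l i * bform u (Y i) v.
Proof.
rewrite /bform mulmx_sumr mulmx_suml summxE; apply: eq_bigr => i _.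
by rewrite -scalemxAr -scalemxAl mxE.
Qed.

Lemma bformC X u v : X^T = X -> bform u X v = bform v X u.
Proof.
move=> symX; rewrite /bform.
have -> : v^T *m X *m u = (u^T *m X *m v)^T.
  by rewrite !trmx_mul trmxK symX mulmxA.
by rewrite [RHS]mxE.
Qed.

Lemma psd_CauchySchwarz X u v :
  psd X -> bform u X v ^+ 2 <= bform u X u * bform v X v.
Proof.
move=> [symX X_ge0]; rewrite mulrC; apply: discr_le_of_quadratic_ge0.
  exact: X_ge0.
move=> t; have := X_ge0 (u + t *: v); rewrite -/(bform _ _ _).
rewrite !(bformDl, bformDr, bformZl, bformZr) (bformC v u symX).
by congr (0 <= _); ring.
Qed.

Lemma bform_outer u p q v :
  bform u (p *m q^T) v = (u^T *m p) 0 0 * (v^T *m q) 0 0.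
Proof.
rewrite /bform mulmxA -mulmxA mxE big_ord1.
have -> : q^T *m v = (v^T *m q)^T by rewrite trmx_mul trmxK.
by rewrite [in X in _ * X]mxE.
Qed.

Lemma bform_delta X i j : bform (delta_mx i 0) X (delta_mx j 0) = X i j.
Proof. by rewrite /bform trmx_delta -rowE -colE !mxE. Qed.

Lemma psd_outer w : psd (w *m w^T).
Proof.
split=> [|z]; first by rewrite trmx_mul trmxK.
by rewrite -/(bform z _ z) bform_outer -expr2 sqr_ge0.
Qed.

Lemma psd_bform_eq0 X u v : psd X -> bform u X u = 0 -> bform u X v = 0.
Proof.
move=> psdX uXu0; have := psd_CauchySchwarz u v psdX; rewrite uXu0 mul0r.
by move=> uXv2_le0; apply/eqP; rewrite -sqrf_eq0 eq_le uXv2_le0 sqr_ge0.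
Qed.

Lemma psd_neq0_bform_gt0 X : psd X -> X != 0 -> exists y, 0 < bform y X y.
Proof.
move=> psdX; have [i Xii_gt0 _|diag_le0] := pickP (fun i => 0 < X i i).
  by exists (delta_mx i 0); rewrite bform_delta.
case/eqP; apply/matrixP => i j; rewrite mxE -bform_delta.
apply: psd_bform_eq0 => //; apply/le_anti.
by rewrite bform_delta leNgt diag_le0 -bform_delta; exact: psdX.2.
Qed.

End BilinearForm.

Definition pivot (R : realType) n (X : 'M[R]_n) (y : 'cV[R]_n) : 'cV[R]_n :=
  (Num.sqrt (bform y X y))^-1 *: (X *m y).

Section Pivot.
Variables (R : realType) (n : nat) (X : 'M[R]_n) (y : 'cV[R]_n).
Hypothesis psdX : psd X.

Let p := pivot X y.

Lemma pivot_outer : p *m p^T = (bform y X y)^-1 *: (X *m y *m (X *m y)^T).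
Proof.
rewrite /p /pivot linearZ /= -scalemxAl -scalemxAr scalerA -expr2 exprVn.
by rewrite sqr_sqrtr //; exact: psdX.2.
Qed.

Lemma bform_pivot u v :
  bform u (p *m p^T) v = bform u X y * bform v X y / bform y X y.
Proof. by rewrite pivot_outer bformZm bform_outer /bform !mulmxA mulrC. Qed.

Lemma psd_sub_pivot : psd (X - p *m p^T).
Proof.
have [symX X_ge0] := psdX.
split=> [|z]; first by rewrite linearB /= trmx_mul trmxK symX.
rewrite -/(bform z _ z) bformBm bform_pivot -expr2 subr_ge0.
have := X_ge0 y; rewrite -/(bform y X y) le_eqVlt => /orP[/eqP <-|yXy_gt0].
  by rewrite invr0 mulr0; exact: X_ge0.
by rewrite ler_pdivrMr // psd_CauchySchwarz.
Qed.

Hypothesis yXy_gt0 : 0 < bform y X y.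

Lemma sub_pivot_mulmx_eq0 : (X - p *m p^T) *m y = 0.
Proof.
rewrite pivot_outer mulmxBl -scalemxAl -(mulmxA (X *m y)).
rewrite [_^T *m y]mx11_scalar trmx_mul psdX.1 mul_mx_scalar scalerA.
by rewrite mulVf ?gt_eqF // scale1r subrr.
Qed.

Lemma mxrank_sub_pivot : (\rank (X - p *m p^T)%R < \rank X)%N.
Proof.
apply: rank_ltmx; rewrite ltmxE; apply/andP; split.
  have -> : X - p *m p^T = (1%:M - (bform y X y)^-1 *: (X *m y *m y^T)) *m X.
    by rewrite pivot_outer trmx_mul psdX.1 mulmxBl mul1mx -scalemxAl !mulmxA.
  exact: submxMl.
apply/negP => /submxP [D XD]; have Xy0 : X *m y = 0.
  by rewrite XD -mulmxA sub_pivot_mulmx_eq0 mulmx0.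
by move: yXy_gt0; rewrite /bform -mulmxA Xy0 mulmx0 mxE ltxx.
Qed.

End Pivot.

Lemma ROG_of_rank1_sums (R : realType) n (S : 'M[R]_n -> Prop) :
  (forall k (l : 'I_k -> R) (Y : 'I_k -> 'M[R]_n),
     (forall i, 0 <= l i) -> (forall i, S (Y i)) ->
     S (\sum_(i < k) l i *: Y i)) ->
  (forall X, S X -> exists s : seq 'cV[R]_n,
     (forall x, x \in s -> S (x *m x^T)) /\ X = \sum_(x <- s) x *m x^T) ->
  ROG S.
Proof.
move=> S_conic S_rank1 X; split; last first.
  move=> [k [l [Y [l_ge0 [_ [SY ->]]]]]].
  by apply: S_conic => // i; case: (SY i).
move=> /S_rank1 [s [s_S ->]].
have S_scale r Y : 0 <= r -> S Y -> S (r *: Y).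
  move=> r_ge0 SY; have := S_conic 1 (fun _ => r) (fun _ => Y).
  by rewrite big_ord1; apply.
(* Padding with 0 keeps the family nonempty when s = [::]. *)
pose t := (0 : 'cV[R]_n) :: s; pose k := size t.
have t_S x : x \in t -> S (x *m x^T).
  rewrite inE => /orP[/eqP ->|/s_S //]; rewrite mul0mx.
  by have := S_conic 0 (fun _ => 0) (fun _ => 0); rewrite big_ord0; apply=> -[].
have k_gt0 : 0 < k%:R :> R by rewrite ltr0n.
pose w i := Num.sqrt k%:R *: t`_i.
have wwE i : w i *m (w i)^T = k%:R *: (t`_i *m (t`_i)^T).
  by rewrite linearZ /= -scalemxAl -scalemxAr scalerA -expr2 sqr_sqrtr // ltW.
exists k, (fun _ => k%:R^-1), (fun i : 'I_k => w i *m (w i)^T); split.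
  by move=> _; rewrite invr_ge0 ltW.
split.
  by rewrite sumr_const card_ord -[k%:R^-1 *+ k]mulr_natr mulVf ?gt_eqF.
split.
  move=> i; split; last by exists (w i).
  by rewrite wwE; apply: S_scale; [exact: ltW | apply: t_S; exact: mem_nth].
have -> : \sum_(x <- s) x *m x^T = \sum_(x <- t) x *m x^T.
  by rewrite big_cons mul0mx add0r.
rewrite (big_nth 0) big_mkord; apply: eq_bigr => i _.
by rewrite wwE scalerA mulVf ?gt_eqF // scale1r.
Qed.

Lemma ROG_ext (R : realType) n (S S' : 'M[R]_n -> Prop) :
  (forall X, S X <-> S' X) -> ROG S' -> ROG S.
Proof.
move=> SS' rogS' X; rewrite SS' rogS'.
split=> -[k [l [Y [l_ge0 [l_sum [SY ->]]]]]]; exists k, l, Y;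
  (split; [exact: l_ge0 | split; [exact: l_sum | split=> // i]]);
  by have [/SS' ? ?] := SY i.
Qed.

Definition bform_cone (R : realType) n (P : seq ('cV[R]_n * 'cV[R]_n))
    (X : 'M[R]_n) : Prop :=
  psd X /\ all (fun uv => 0 <= bform uv.1 X uv.2) P.

(* Exactly the conditions under which both pieces of the split at y (see
   [bform_pivot]) stay in [bform_cone P]. *)
Definition admissible_pivot (R : realType) n (P : seq ('cV[R]_n * 'cV[R]_n))
    (X : 'M[R]_n) (y : 'cV[R]_n) : bool :=
  (0 < bform y X y) &&
  all (fun uv => 0 <= bform uv.1 X y * bform uv.2 X y
                   <= bform uv.1 X uv.2 * bform y X y) P.

Section BformCone.
Variables (R : realType) (n : nat) (P : seq ('cV[R]_n * 'cV[R]_n)).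

Lemma bform_cone_conic k (l : 'I_k -> R) (Y : 'I_k -> 'M[R]_n) :
  (forall i, 0 <= l i) -> (forall i, bform_cone P (Y i)) ->
  bform_cone P (\sum_(i < k) l i *: Y i).
Proof.
move=> l_ge0 coneY.
have sum_ge0 u v : (forall i, 0 <= bform u (Y i) v) ->
    0 <= bform u (\sum_(i < k) l i *: Y i) v.
  by move=> Y_ge0; rewrite bform_sumZm sumr_ge0 // => i _; rewrite mulr_ge0.
split; [split|].
- rewrite linear_sum; apply: eq_bigr => i _ /=; rewrite linearZ /=.
  by case: (coneY i) => -[-> _].
- by move=> z; apply: sum_ge0 => i; case: (coneY i) => -[_ + _]; apply.
- apply/allP => uv uvP; apply: sum_ge0 => i.
  by case: (coneY i) => _ /allP; apply.
Qed.

Lemma bform_cone_split X y :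
  bform_cone P X -> admissible_pivot P X y ->
  bform_cone P (pivot X y *m (pivot X y)^T) /\
  bform_cone P (X - pivot X y *m (pivot X y)^T).
Proof.
move=> [psdX _] /andP[yXy_gt0 /allP adm]; split; split.
- exact: psd_outer.
- apply/allP => uv /adm /andP[prod_ge0 _].
  by rewrite bform_pivot // divr_ge0 // ltW.
- exact: psd_sub_pivot.
- apply/allP => uv /adm /andP[_ prod_le].
  by rewrite bformBm bform_pivot // subr_ge0 ler_pdivrMr.
Qed.

Hypothesis pivot_exists :
  forall X, bform_cone P X -> X != 0 -> exists y, admissible_pivot P X y.

Lemma bform_cone_rank1_sum X :
  bform_cone P X -> exists s : seq 'cV[R]_n,
    (forall x, x \in s -> bform_cone P (x *m x^T)) /\
    X = \sum_(x <- s) x *m x^T.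
Proof.
elim: {X}(\rank X).+1 {-2}X (ltnSn (\rank X)) => // r IH X rankX coneX.
have [->|X_neq0] := eqVneq X 0; first by exists [::]; rewrite big_nil.
have [y ady] := pivot_exists coneX X_neq0.
have [cone_p cone_rest] := bform_cone_split coneX ady.
have rank_rest := mxrank_sub_pivot coneX.1 (andP ady).1.
have [s [s_cone sumE]] := IH _ (leq_trans rank_rest rankX) cone_rest.
exists (pivot X y :: s); split.
  by move=> x; rewrite inE => /orP[/eqP ->|/s_cone].
by rewrite big_cons -sumE addrC subrK.
Qed.

Theorem bform_cone_ROG : ROG (bform_cone P).
Proof. exact: ROG_of_rank1_sums bform_cone_conic bform_cone_rank1_sum. Qed.

End BformCone.

Lemma gram_pivot_choice (R : realFieldType) (aa bb cc ab bc ac : R) :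
  0 <= aa -> 0 <= bb -> 0 <= cc -> 0 <= ab -> 0 <= bc -> 0 <= ac ->
  ab ^+ 2 <= aa * bb -> bc ^+ 2 <= bb * cc -> ac ^+ 2 <= aa * cc ->
  0 < aa + bb + cc ->
  [\/ 0 < aa /\ ab * ac <= bc * aa, 0 < bb /\ ab * bc <= ac * bb
    | 0 < cc /\ ac * bc <= ab * cc].
Proof.
move=> aa_ge0 bb_ge0 cc_ge0 ab_ge0 bc_ge0 ac_ge0 Cab Cbc Cac diag_gt0.
have [aa_gt0|aa_le0] := ltrP 0 aa; last first.
  have aa0 : aa = 0 by apply/le_anti/andP.
  have [ab0 ac0] : ab = 0 /\ ac = 0 by split; nra.
  have [bb_gt0|bb_le0] := ltrP 0 bb.
    by apply: Or32; rewrite ab0 ac0 !mul0r.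
  have bc0 : bc = 0 by nra.
  by apply: Or33; split; [lra | rewrite ab0 bc0 !mulr0 mul0r].
have [pivot_a|ab_ac_gt] := lerP (ab * ac) (bc * aa); first exact: Or31.
have [ab_gt0 ac_gt0] : 0 < ab /\ 0 < ac by split; nra.
have [bb_gt0 cc_gt0] : 0 < bb /\ 0 < cc by split; nra.
have [pivot_b|ab_bc_gt] := lerP (ab * bc) (ac * bb); first exact: Or32.
have [pivot_c|ac_bc_gt] := lerP (ac * bc) (ab * cc); first exact: Or33.
have bc_gt0 : 0 < bc by nra.
have : bc * aa * (ac * bb) * (ab * cc) < ab * ac * (ab * bc) * (ac * bc).
  by apply: ltr_pM; [nra | nra | apply: ltr_pM; nra | done].
nra.
Qed.

Lemma three_constraint_pivot_exists (R : realType) n (a b c : 'cV[R]_n) X :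
  bform_cone [:: (a, b); (b, c); (a, c)] X -> X != 0 ->
  exists y, admissible_pivot [:: (a, b); (b, c); (a, c)] X y.
Proof.
rewrite /bform_cone /admissible_pivot /= !andbT.
move=> [psdX /and3P[ab_ge0 bc_ge0 ac_ge0]] X_neq0; have symX := psdX.1.
have diag_ge0 u : 0 <= bform u X u := psdX.2 u.
have [diag_gt0|diag_le0] := ltrP 0 (bform a X a + bform b X b + bform c X c).
  have CS := psd_CauchySchwarz _ _ psdX.
  case: (gram_pivot_choice (diag_ge0 a) (diag_ge0 b) (diag_ge0 c) ab_ge0 bc_ge0
    ac_ge0 (CS a b) (CS b c) (CS a c) diag_gt0) => -[piv_gt0 piv_le];
    [exists a | exists b | exists c];
    rewrite ?(bformC b a symX) ?(bformC c a symX) ?(bformC c b symX) piv_gt0 /=;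
    by repeat (apply/andP; split); nra.
have [aa0 bb0 cc0] : [/\ bform a X a = 0, bform b X b = 0 & bform c X c = 0].
  by move: (diag_ge0 a) (diag_ge0 b) (diag_ge0 c) diag_le0; split; lra.
have [y yXy_gt0] := psd_neq0_bform_gt0 psdX X_neq0; exists y.
rewrite yXy_gt0 !(psd_bform_eq0 _ psdX aa0) !(psd_bform_eq0 _ psdX bb0).
by rewrite !(psd_bform_eq0 _ psdX cc0) !mul0r lexx.
Qed.

Lemma Sabc_bform_cone (R : realType) n (a b c : 'cV[R]_n) X :
  Sabc a b c X <-> bform_cone [:: (a, b); (b, c); (a, c)] X.
Proof.
rewrite /bform_cone /= andbT.
split=> [[psdX [ab [bc ac]]] | [psdX /and3P[ab bc ac]]] //.
by split=> //; apply/and3P.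
Qed.

Theorem theorem3p7 (R : realType) (n : nat) (a b c : 'cV[R]_n) :
  ROG (Sabc a b c).
Proof.
apply: (ROG_ext (Sabc_bform_cone a b c)); apply: bform_cone_ROG.
exact: three_constraint_pivot_exists.
Qed.
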